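(* Let $\alpha,\beta\in\Bbbk^n$, let $\mathcal H=\mathcal H(\alpha,\beta,0)$ and let $M$ be the adjacency matrix of $Q$. Then the matrix-valued Hilbert series of $\mathcal H$ is \[h_{\mathcal H}(t)=(I-Mt+Mt^3-It^4)^{-1}=(I-Mt+It^2)^{-1}(1-t^2)^{-1}.\]
   Context: $\Bbbk$ is an algebraically closed field of characteristic zero. Fix $n\ge1$; indices mod $n$, $Q_0=\{0,\dots,n-1\}$. $Q$ is the quiver with vertices $Q_0$ and arrows $u_i:i\to i+1$, $d_i:i+1\to i$; paths are written left to right, $e_i$ is the trivial path at $i$. $\mathcal H(\alpha,\beta,0)$ is $\Bbbk Q$ modulo the relations $d_{i-1}u_{i-1}u_i=\alpha_iu_id_iu_i+\beta_iu_iu_{i+1}d_{i+1}$ and $d_id_{i-1}u_{i-1}=\alpha_id_iu_id_i+\beta_iu_{i+1}d_{i+1}d_i$ for all $i\in Q_0$, graded by path length. The adjacency matrix $M\in M_n(\mathbb N)$ has $(i,j)$ entry the number of arrows from $i$ to $j$. The matrix-valued Hilbert series is $\sum_kH_kt^k$ with $(H_k)_{ij}=\dim_\Bbbk e_i\mathcal H_ke_j$. *)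

From HB Require Import structures.
From mathcomp Require Import all_boot all_algebra.
Set Implicit Arguments. Unset Strict Implicit. Unset Printing Implicit Defensive.
Import GRing.Theory.
Local Open Scope ring_scope.

(* Quiver Q: vertices 'I_n (indices mod n), arrows u_i : i -> i+1 encoded as
   (i, true) and d_i : i+1 -> i encoded as (i, false). *)
Section Quiver.
Variable n : nat.

Definition arrow := ('I_n * bool)%type.
Definition U (i : 'I_n) : arrow := (i, true).
Definition D (i : 'I_n) : arrow := (i, false).
Definition src (a : arrow) : 'I_n := if a.2 then a.1 else ordS a.1.
Definition tgt (a : arrow) : 'I_n := if a.2 then ordS a.1 else a.1.

(* a path of Q: start vertex and a word of arrows, read left to right *)
Definition qpath := ('I_n * seq arrow)%type.
Fixpoint validp (v : 'I_n) (w : seq arrow) : bool :=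
  if w is a :: w' then (src a == v) && validp (tgt a) w' else true.
Definition endpt (v : 'I_n) (w : seq arrow) : 'I_n := foldl (fun _ a => tgt a) v w.
Definition pmul (p q : qpath) : option qpath :=
  if endpt p.1 p.2 == q.1 then Some (p.1, p.2 ++ q.2) else None.

Definition allpaths (k : nat) : seq qpath :=
  flatten [seq [seq (v, val t) | v <- enum 'I_n, t <- enum {: m.-tuple arrow}]
          | m <- iota 0 k.+1].
Definition validpaths (k : nat) : seq qpath :=
  [seq p <- allpaths k | validp p.1 p.2].

Definition adjM : 'M[int]_n :=
  \matrix_(i, j) (#|[pred a : arrow | (src a == i) && (tgt a == j)]|%:Z).

Variable K : fieldType.

Definition elt := seq (K * qpath).
Definition emul (x y : elt) : elt :=
  flatten [seq [seq (a.1 * b.1, pq) | pq <- oapp (fun z => [:: z]) [::] (pmul a.2 b.2)]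
          | a <- x, b <- y].

(* degree-k component of kQ, with coordinates indexed by (start vertex, k-word) *)
Definition Pk (k : nat) := ('I_n * k.-tuple arrow)%type.
Definition Nk (k : nat) := #|{: Pk k}|.
Definition bvec (k : nat) (p : qpath) : 'rV[K]_(Nk k) :=
  match (insub p.2 : option (k.-tuple arrow)) with
  | Some t => delta_mx 0 (enum_rank ((p.1, t) : Pk k))
  | None => 0
  end.
Definition vec (k : nat) (x : elt) : 'rV[K]_(Nk k) := \sum_(c <- x) c.1 *: bvec k c.2.

Definition rel1 (al be : 'I_n -> K) (i : 'I_n) : elt :=
  [:: (1, (i, [:: D (ord_pred i); U (ord_pred i); U i]));
      (- al i, (i, [:: U i; D i; U i]));
      (- be i, (i, [:: U i; U (ordS i); D (ordS i)]))].
Definition rel2 (al be : 'I_n -> K) (i : 'I_n) : elt :=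
  [:: (1, (ordS i, [:: D i; D (ord_pred i); U (ord_pred i)]));
      (- al i, (ordS i, [:: D i; U i; D i]));
      (- be i, (ordS i, [:: U (ordS i); D (ordS i); D i]))].
Definition rels (al be : 'I_n -> K) : seq elt :=
  [seq rel1 al be i | i <- enum 'I_n] ++ [seq rel2 al be i | i <- enum 'I_n].

(* degree-k part of the two-sided ideal generated by the relations:
   span of the degree-k components of p * r * q, p q paths, r a relation *)
Definition idealk (al be : 'I_n -> K) (k : nat) : {vspace 'rV[K]_(Nk k)} :=
  <<flatten [seq [seq vec k (emul (emul [:: (1, p)] r) [:: (1, q)])
                  | q <- validpaths k]
              | p <- validpaths k, r <- rels al be]>>%VS.

Definition tuples (k : nat) : seq (k.-tuple arrow) := enum {: k.-tuple arrow}.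

Definition pathspace (i j : 'I_n) (k : nat) : {vspace 'rV[K]_(Nk k)} :=
  <<[seq bvec k (i, val t) | t <- [seq t <- tuples k
                                   | validp i (val t) && (endpt i (val t) == j)]]>>%VS.

(* dim e_i H_k e_j = dim (e_i kQ_k e_j) - dim (e_i I_k e_j) *)
Definition hdim (al be : 'I_n -> K) (i j : 'I_n) (k : nat) : nat :=
  (\dim (pathspace i j k) - \dim (pathspace i j k :&: idealk al be k))%N.

Definition Hmat (al be : 'I_n -> K) (k : nat) : 'M[int]_n :=
  \matrix_(i, j) (hdim al be i j k)%:Z.

End Quiver.

(* matrix-valued formal power series as coefficient sequences *)
Definition psmul (n : nat) (A B : nat -> 'M[int]_n) (k : nat) : 'M[int]_n :=
  \sum_(l < k.+1) A l *m B (k - l)%N.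
Definition pscoef (n : nat) (s : seq 'M[int]_n) (k : nat) : 'M[int]_n := nth 0 s k.
Definition psone (n : nat) (k : nat) : 'M[int]_n := if k == 0%N then 1%:M else 0.
Definition ps_inverse (n : nat) (A B : nat -> 'M[int]_n) : Prop :=
  (forall k, psmul A B k = psone n k) /\ (forall k, psmul B A k = psone n k).

From HB Require Import structures.
From mathcomp Require Import all_boot all_algebra all_fingroup.
From mathcomp Require Import ring zify.
Set Implicit Arguments. Unset Strict Implicit. Unset Printing Implicit Defensive.
Import GRing.Theory.
Local Open Scope ring_scope.

(* A path is determined by its start and the word of its arrow directions (true for
   u, false for d).  The leading words of the relations are the words d ? u, and
   rewriting them strictly decreases the number of pairs (d, later letter); the
   ambiguities of this rewriting system resolve, so the paths whose word avoids the
   pattern d ? u form a basis of H_k.  In such a word the letters at even positions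
   read u^a d^*, those at odd positions u^c d^*, so the normal paths from i end at
   i + 2a + 2c - k.  With P the permutation matrix of i |-> i + 1 this gives
   H_k = S_ceil(k/2) S_floor(k/2), where S_m = sum_a P^a P^-(m-a) = U_m(P + P^-1) = U_m(M)
   for the Chebyshev polynomials U_m of the second kind.  Both inverse formulas are
   then identities between power series with coefficients in Z[X], which follow from
   the recurrence U_(m+2) = X U_(m+1) - U_m. *)

Lemma cat_split (T : Type) (A B A' B' : seq T) : (size A <= size A')%N ->
  A ++ B = A' ++ B' -> exists C, A' = A ++ C /\ B = C ++ B'.
Proof.
move=> hs e; exists (drop (size A) A').
have hA : take (size A) A' = A by rewrite -(takel_cat B' hs) -e take_size_cat.
have eA : A' = A ++ drop (size A) A' by rewrite -{1}(cat_take_drop (size A) A') hA.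
split=> //.
by rewrite -(drop_size_cat B (erefl (size A))) e {1}eA -catA drop_size_cat.
Qed.

Lemma free_deltas (F : fieldType) m (S : seq 'I_m) :
  uniq S -> free [seq 'e_j : 'rV[F]_m | j <- S].
Proof.
elim: S => [|j S IH] /=; first by rewrite /free span_nil dimv0.
case/andP => hj hu; rewrite free_cons IH // andbT; apply/negP => hin.
have := congr1 (fun x : 'rV[F]_m => x 0 j) (coord_span (X := in_tuple _) hin).
rewrite /= summxE mxE !eqxx big1 => [/eqP|i _]; first by rewrite oner_eq0.
have hi : (i < size S)%N by case: i => /= i; rewrite size_map.
rewrite mxE (nth_map j) // mxE eqxx eq_sym.
by case: eqP => [hS|_]; [rewrite -hS mem_nth in hj | rewrite mulr0].
Qed.

Lemma dim_span_deltas (F : fieldType) m (S : seq 'I_m) :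
  uniq S -> \dim <<[seq 'e_j : 'rV[F]_m | j <- S]>> = size S.
Proof. by move/(free_deltas F)/eqP ->; rewrite size_map. Qed.

Lemma count_card (T : finType) (p : pred T) : count p (enum T) = #|p|.
Proof.
by rewrite cardE /enum_mem size_filter count_filter; apply: eq_count => x; rewrite /= andbT.
Qed.

Section Redexes.
Implicit Types (y : bool) (bs A B : seq bool).

(* Read from a vertex v, [lhs true] is d_(v-1) u_(v-1) u_v, the leading word of the
   first relation at v, and [lhs false] is d_(v-1) d_(v-2) u_(v-2), that of the second
   relation at v-1; [rhs1] and [rhs2] are the words carrying alpha and beta. *)
Definition lhs y := [:: false; y; true].
Definition rhs1 y := if y then [:: true; false; true] else [:: false; true; false].
Definition rhs2 y := if y then [:: true; true; false] else [:: true; false; false].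

Lemma size_rhs1 A y B : size (A ++ rhs1 y ++ B) = size (A ++ lhs y ++ B).
Proof. by rewrite !size_cat; case: y. Qed.

Lemma size_rhs2 A y B : size (A ++ rhs2 y ++ B) = size (A ++ lhs y ++ B).
Proof. by rewrite !size_cat; case: y. Qed.

Fixpoint weight bs := if bs is b :: bs' then (~~ b * size bs' + weight bs')%N else 0%N.

Lemma weight_cat A B : weight (A ++ B) = (weight A + count negb A * size B + weight B)%N.
Proof. by elim: A => //= b A ->; rewrite size_cat; case: b => /=; lia. Qed.

Lemma weight_ctx A B X Y : size X = size Y -> count negb X = count negb Y ->
  (weight X < weight Y)%N -> (weight (A ++ X ++ B) < weight (A ++ Y ++ B))%N.
Proof. by move=> hs hd hw; rewrite !weight_cat !size_cat hs hd; lia. Qed.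

Lemma weight_rhs1 A y B : (weight (A ++ rhs1 y ++ B) < weight (A ++ lhs y ++ B))%N.
Proof. by apply: weight_ctx; case: y. Qed.

Lemma weight_rhs2 A y B : (weight (A ++ rhs2 y ++ B) < weight (A ++ lhs y ++ B))%N.
Proof. by apply: weight_ctx; case: y. Qed.

Definition redex_at bs p := [&& (p.+2 < size bs)%N, ~~ nth true bs p & nth false bs p.+2].
Definition reducible bs := has (redex_at bs) (iota 0 (size bs)).
Definition first_redex bs := find (redex_at bs) (iota 0 (size bs)).

Lemma redex_atE bs p : redex_at bs p ->
  bs = take p bs ++ lhs (nth false bs p.+1) ++ drop p.+3 bs.
Proof.
case/and3P => hs hp hp2; rewrite (set_nth_default false) in hp; last by lia.
have [h0 h1] : (p < size bs)%N /\ (p.+1 < size bs)%N by split; lia.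
rewrite -{1}(cat_take_drop p bs) (drop_nth false h0) (drop_nth false h1).
by rewrite (drop_nth false hs) (negbTE hp) hp2.
Qed.

Lemma redex_at_cat A y B : redex_at (A ++ lhs y ++ B) (size A).
Proof.
rewrite /redex_at !size_cat /= !nth_cat ltnn subnn /= ifF; last by lia.
have -> : ((size A).+2 - size A = 2)%N by lia.
by rewrite /= andbT; lia.
Qed.

Lemma reducible_cat A y B : reducible (A ++ lhs y ++ B).
Proof.
apply/hasP; exists (size A); last exact: redex_at_cat.
by rewrite mem_iota !size_cat /=; lia.
Qed.

Lemma redex_at_first_redex bs : reducible bs -> redex_at bs (first_redex bs).
Proof.
move=> h; have := nth_find 0 h.
have hf : (first_redex bs < size bs)%N by move: h; rewrite /reducible has_find size_iota.
by rewrite nth_iota.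
Qed.

Lemma reducibleP bs : reducible bs -> exists A y B, bs = A ++ lhs y ++ B.
Proof. by move/redex_at_first_redex/redex_atE => e; do 3!eexists; exact: e. Qed.

Lemma reducible_cons b bs : reducible (b :: bs) = redex_at (b :: bs) 0 || reducible bs.
Proof. by rewrite /reducible /= -[1%N]addn0 iotaDl has_map. Qed.

End Redexes.

(* [word a c k] is the normal word of length k with a letters u in even positions
   and c in odd positions; the two parities swap roles at each letter. *)
Fixpoint word a c k : seq bool :=
  if k is k'.+1 then (0 < a)%N :: word c a.-1 k' else [::].

Lemma size_word a c k : size (word a c k) = k.
Proof. by elim: k a c => //= k IH a c; rewrite IH. Qed.

Lemma word_irreducible a c k : ~~ reducible (word a c k).
Proof.
elim: k a c => //= k IH a c; rewrite reducible_cons (negbTE (IH _ _)) orbF /redex_at /= size_word.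
by case: a => [|a]; case: k {IH} => [|[|k]].
Qed.

Lemma count_word a c k : (a <= uphalf k)%N -> (c <= k./2)%N ->
  count id (word a c k) = (a + c)%N.
Proof.
elim: k a c => [|k IH] a c /=; first by rewrite !leqn0 => /eqP-> /eqP->.
by move=> ha hc; rewrite IH //; case: a ha => //=; lia.
Qed.

Lemma count_negb_word a c k : (a <= uphalf k)%N -> (c <= k./2)%N ->
  count negb (word a c k) = (uphalf k - a + (k./2 - c))%N.
Proof.
elim: k a c => [|k IH] a c /=; first by rewrite !leqn0 => /eqP-> /eqP->.
by move=> ha hc; rewrite IH //; case: a ha => //=; lia.
Qed.

Lemma word_inj k a c a' c' : (a <= uphalf k)%N -> (c <= k./2)%N ->
  (a' <= uphalf k)%N -> (c' <= k./2)%N -> word a c k = word a' c' k -> a = a' /\ c = c'.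
Proof.
elim: k a c a' c' => [|k IH] a c a' c' /=; first by rewrite !leqn0 => /eqP-> /eqP-> /eqP-> /eqP->.
move=> ha hc ha' hc' [e0 e].
have [<- ea] : c = c' /\ a.-1 = a'.-1 by apply: (IH _ _ _ _ hc _ hc' _ e); lia.
by split=> //; case: a e0 ea {ha e} => [|a]; case: a' {ha'} => [|a'] //= _ ->.
Qed.

Lemma irreducible_word bs : ~~ reducible bs ->
  exists a c, [/\ (a <= uphalf (size bs))%N, (c <= (size bs)./2)%N & bs = word a c (size bs)].
Proof.
elim: bs => [|x w IH]; first by exists 0%N, 0%N.
rewrite reducible_cons negb_or => /andP [h0 /IH [c [a [hc ha ew]]]].
have a0 : ~~ x -> a = 0%N.
  move=> nx; move: h0 ha; rewrite ew /redex_at /= size_word nx /=.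
  by case: (size w) => [|[|m]]; case: a {ew}.
exists (if x then a.+1 else 0%N), c.
case: x {h0} a0 => [_|/(_ isT) a0]; last rewrite a0 in ew *.
all: by rewrite /= -ew; split=> //; lia.
Qed.

Section PathWords.
Variable n : nat.
Implicit Types (s v : 'I_n) (b y : bool) (bs A B : seq bool).

Definition step v b : 'I_n := if b then ordS v else ord_pred v.
Definition arrow_of v b : arrow n := if b then U v else D (ord_pred v).

Fixpoint wpath v bs : seq (arrow n) :=
  if bs is b :: bs' then arrow_of v b :: wpath (step v b) bs' else [::].
Definition wend v bs : 'I_n := foldl step v bs.

Lemma src_arrow_of v b : src (arrow_of v b) = v.
Proof. by case: b; rewrite /src //= ord_predK. Qed.

Lemma tgt_arrow_of v b : tgt (arrow_of v b) = step v b.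
Proof. by case: b. Qed.

Lemma wend_cat v bs1 bs2 : wend v (bs1 ++ bs2) = wend (wend v bs1) bs2.
Proof. exact: foldl_cat. Qed.

Lemma wpath_cat v bs1 bs2 : wpath v (bs1 ++ bs2) = wpath v bs1 ++ wpath (wend v bs1) bs2.
Proof. by elim: bs1 v => //= b bs1 IH v; rewrite IH. Qed.

Lemma size_wpath v bs : size (wpath v bs) = size bs.
Proof. by elim: bs v => //= b bs IH v; rewrite IH. Qed.

Lemma wpathK v bs : map snd (wpath v bs) = bs.
Proof. by elim: bs v => //= b bs IH v; rewrite IH; case: b. Qed.

Lemma validp_wpath v bs : validp v (wpath v bs).
Proof. by elim: bs v => //= b bs IH v; rewrite src_arrow_of eqxx tgt_arrow_of IH. Qed.

Lemma endpt_wpath v bs : endpt v (wpath v bs) = wend v bs.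
Proof. by elim: bs v => //= b bs IH v; rewrite /endpt /= tgt_arrow_of -IH. Qed.

Lemma validp_wpathE v (w : seq (arrow n)) : validp v w -> wpath v (map snd w) = w.
Proof.
elim: w v => //= [[x [|]] w] IH v /andP [/eqP hs hw]; rewrite /src /= in hs.
  by subst x; rewrite IH.
have hx : x = ord_pred v by rewrite -hs ordSK.
by subst x; rewrite IH.
Qed.

Lemma endpt_cat v (w1 w2 : seq (arrow n)) : endpt v (w1 ++ w2) = endpt (endpt v w1) w2.
Proof. exact: foldl_cat. Qed.

Lemma wend_lhs v y : wend v (lhs y) = step v y.
Proof. by case: y; rewrite /wend /step /= ?ordSK ?ord_predK. Qed.

Lemma wend_rhs1 s A y B : wend s (A ++ rhs1 y ++ B) = wend s (A ++ lhs y ++ B).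
Proof. by rewrite !wend_cat; case: y; rewrite /wend /step /= ?ordSK ?ord_predK. Qed.

Lemma wend_rhs2 s A y B : wend s (A ++ rhs2 y ++ B) = wend s (A ++ lhs y ++ B).
Proof. by rewrite !wend_cat; case: y; rewrite /wend /step /= ?ordSK ?ord_predK. Qed.

End PathWords.

Section Relations.
Variables (n : nat) (K : fieldType) (al be : 'I_n -> K) (k : nat).
Implicit Types (s v : 'I_n) (y : bool) (bs A B C : seq bool).

Definition wvec s bs : 'rV[K]_(Nk n k) := bvec K k (s, wpath s bs).

Definition coef1 y v := if y then al v else al (ord_pred v).
Definition coef2 y v := if y then be v else be (ord_pred v).

Definition relv s A y B : 'rV[K]_(Nk n k) :=
  wvec s (A ++ lhs y ++ B) - coef1 y (wend s A) *: wvec s (A ++ rhs1 y ++ B)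
  - coef2 y (wend s A) *: wvec s (A ++ rhs2 y ++ B).

Lemma relv_overlap s A B :
  relv s A false (true :: B) - relv s (A ++ [:: false]) true B =
  coef2 false (wend s A) *: (relv s A true (false :: B) - relv s (A ++ [:: true]) false B).
Proof.
rewrite /relv !wend_cat /lhs /rhs1 /rhs2 /coef1 /coef2 /= ordSK -!catA /=.
by apply/rowP => j; rewrite !mxE; ring.
Qed.

Lemma relv_disjoint s A y C y' B :
  let v := wend s A in let v' := wend s (A ++ lhs y ++ C) in
  relv s A y (C ++ lhs y' ++ B) - relv s (A ++ lhs y ++ C) y' B =
  coef1 y' v' *: relv s A y (C ++ rhs1 y' ++ B) + coef2 y' v' *: relv s A y (C ++ rhs2 y' ++ B)
  - coef1 y v *: relv s (A ++ rhs1 y ++ C) y' B - coef2 y v *: relv s (A ++ rhs2 y ++ C) y' B.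
Proof.
move=> v v'; rewrite /relv.
rewrite wend_rhs1 wend_rhs2 -/v -/v' !catA.
by apply/rowP => j; rewrite !mxE; ring.
Qed.

(* Diamond lemma: the two ambiguities of the rewriting system, the overlap d d u u
   and two disjoint redexes, resolve modulo relations of smaller weight. *)
Lemma relv_diamond (J : {vspace 'rV[K]_(Nk n k)}) s A y B A' y' B' :
  (size A <= size A')%N -> A ++ lhs y ++ B = A' ++ lhs y' ++ B' ->
  (forall A1 y1 B1, (weight (A1 ++ lhs y1 ++ B1) < weight (A ++ lhs y ++ B))%N ->
     relv s A1 y1 B1 \in J) ->
  relv s A y B - relv s A' y' B' \in J.
Proof.
move=> hs e IH; have [C [-> hB]] := cat_split hs e; clear e hs.
case: C hB => [|c0 [|c1 [|c2 C]]] /= hB.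
- by case: hB => -> ->; rewrite cats0 subrr rpred0.
- case: hB => ? ? ? ?; subst; rewrite relv_overlap; apply/rpredZ/rpredB; apply: IH.
    exact: (@weight_ctx A B' [:: false; true; true; false] [:: false; false; true; true]).
  rewrite -catA.
  exact: (@weight_ctx A B' [:: true; false; false; true] [:: false; false; true; true]).
- by case: hB.
- case: hB => <- <- <- hB; subst B; rewrite -[[:: false, y, true & C]]/(lhs y ++ C) relv_disjoint.
  apply/rpredB; [apply/rpredB; [apply/rpredD|]|]; apply/rpredZ/IH; rewrite -?catA.
  + by have := weight_rhs1 (A ++ lhs y ++ C) y' B'; rewrite -!catA.
  + by have := weight_rhs2 (A ++ lhs y ++ C) y' B'; rewrite -!catA.
  + exact: weight_rhs1.
  + exact: weight_rhs2.
Qed.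

Lemma wvec_out s bs : size bs != k -> wvec s bs = 0.
Proof. by move=> hk; rewrite /wvec /bvec /= insubN // size_wpath. Qed.

Lemma relv_out s A y B : size (A ++ lhs y ++ B) != k -> relv s A y B = 0.
Proof.
by move=> hk; rewrite /relv !wvec_out ?size_rhs1 ?size_rhs2 ?scaler0 ?subr0.
Qed.

Lemma wvec_lhs s A y B : wvec s (A ++ lhs y ++ B) =
  relv s A y B + coef1 y (wend s A) *: wvec s (A ++ rhs1 y ++ B)
  + coef2 y (wend s A) *: wvec s (A ++ rhs2 y ++ B).
Proof. by rewrite /relv addrAC !subrK. Qed.

Lemma vec_rel1 s A i e B :
  vec k (emul (emul [:: (1, (s, wpath s A))] (rel1 al be i)) [:: (1, (e, wpath e B))]) =
  if (wend s A == i) && (ordS i == e) then relv s A true B else 0.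
Proof.
rewrite /emul /pmul /= endpt_wpath; case: eqP => [<-|_] /=; last by rewrite /vec big_nil.
rewrite !endpt_cat endpt_wpath /=; case: eqP => [<-|_] /=; last by rewrite /vec big_nil.
set v := wend s A; rewrite /vec !big_cons big_nil /relv /wvec !wpath_cat -/v.
rewrite /wend /= /arrow_of /step /coef1 /coef2 /tgt /= !ordSK !ord_predK -!catA /=.
by apply/rowP => j; rewrite !mxE; ring.
Qed.

Lemma vec_rel2 s A i e B :
  vec k (emul (emul [:: (1, (s, wpath s A))] (rel2 al be i)) [:: (1, (e, wpath e B))]) =
  if (wend s A == ordS i) && (i == e) then relv s A false B else 0.
Proof.
rewrite /emul /pmul /= endpt_wpath; case: eqP => [hv|_] /=; last by rewrite /vec big_nil.
rewrite !endpt_cat endpt_wpath /= {1}/tgt /= ord_predK.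
case: eqP => [<-|_] /=; last by rewrite /vec big_nil.
have {hv} -> : i = ord_pred (wend s A) by rewrite hv ordSK.
set v := wend s A; rewrite /vec !big_cons big_nil /relv /wvec !wpath_cat -/v.
rewrite /wend /= /arrow_of /step /coef1 /coef2 /tgt /= !ordSK !ord_predK -!catA /=.
by apply/rowP => j; rewrite !mxE; ring.
Qed.

Definition relv_at s bs p := relv s (take p bs) (nth false bs p.+1) (drop p.+3 bs).

Definition bits (x : Pk n k) := map snd (val x.2).
Definition reducible_path (x : Pk n k) := validp x.1 (val x.2) && reducible (bits x).
(* One relation per reducible path, taken at its first redex; [normal_vecs] holds the
   other basis vectors, including those of the arrow words that are not paths. *)
Definition red_rels :=
  [seq relv_at x.1 (bits x) (first_redex (bits x)) | x <- enum {: Pk n k} & reducible_path x].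
Definition normal_vecs :=
  [seq bvec K k (x.1, val x.2) | x <- enum {: Pk n k} & ~~ reducible_path x].

Lemma relv_at_first_redex s bs : size bs = k -> reducible bs ->
  relv_at s bs (first_redex bs) \in <<red_rels>>%VS.
Proof.
move=> hk hr; have ht : size (wpath s bs) == k by rewrite size_wpath hk.
apply: memv_span; apply/mapP; exists (s, Tuple ht).
  by rewrite mem_filter mem_enum andbT /reducible_path /bits /= validp_wpath wpathK.
by rewrite /bits /= wpathK.
Qed.

(* A relation differs from the one at the first redex of its word by relations of
   smaller weight. *)
Lemma relv_in_red_rels s A y B : relv s A y B \in <<red_rels>>%VS.
Proof.
move: {2}(weight _).+1 (ltnSn (weight (A ++ lhs y ++ B))) => m.
elim: m A y B => // m IHm A y B hm.
set w := A ++ lhs y ++ B.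
have [hw|hw] := eqVneq (size w) k; last by rewrite relv_out // rpred0.
have hr : reducible w by apply: reducible_cat.
have e := redex_atE (redex_at_first_redex hr).
have IH A1 y1 B1 : (weight (A1 ++ lhs y1 ++ B1) < weight w)%N ->
    relv s A1 y1 B1 \in <<red_rels>>%VS.
  by move=> h1; apply: IHm; apply: leq_trans h1 _; rewrite -ltnS.
rewrite -[relv _ _ _ _](subrK (relv_at s w (first_redex w))).
apply: rpredD; last exact: relv_at_first_redex.
have [hle|hlt] := leqP (size A) (size (take (first_redex w) w)).
  exact: relv_diamond hle e IH.
by rewrite -opprB rpredN; apply: relv_diamond (ltnW hlt) (esym e) _; rewrite -e.
Qed.

Lemma idealk_sub_red_rels : (idealk al be k <= <<red_rels>>)%VS.
Proof.
apply/span_subvP => x /flattenP [l /allpairsP [[[s A] r] [hA hr {l}->]]] /mapP [[e B] hB ->].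
rewrite !mem_filter /= in hA hB; case/andP: hA => hA _; case/andP: hB => hB _.
rewrite -(validp_wpathE hA) -(validp_wpathE hB).
move: hr; rewrite /= mem_cat => /orP [] /mapP [i _ ->]; rewrite ?vec_rel1 ?vec_rel2;
  by case: ifP => _; rewrite ?rpred0 ?relv_in_red_rels.
Qed.

Lemma mem_validpaths v (w : seq (arrow n)) :
  (size w <= k)%N -> validp v w -> (v, w) \in validpaths n k.
Proof.
move=> hs hv; rewrite mem_filter hv; apply/flattenP.
exists [seq (u, val t) | u <- enum 'I_n, t <- enum {: (size w).-tuple (arrow n)}].
  by apply/mapP; exists (size w); rewrite // mem_iota.
by apply/allpairsP; exists (v, in_tuple w); rewrite !mem_enum.
Qed.

Lemma relv_in_idealk s A y B : size (A ++ lhs y ++ B) = k -> relv s A y B \in idealk al be k.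
Proof.
move=> hk; set e := wend s (A ++ lhs y).
have hA : (s, wpath s A) \in validpaths n k.
  by rewrite mem_validpaths ?validp_wpath // size_wpath -hk size_cat leq_addr.
have hB : (e, wpath e B) \in validpaths n k.
  by rewrite mem_validpaths ?validp_wpath // size_wpath -hk !size_cat; lia.
have vec_in r : r \in rels al be ->
    vec k (emul (emul [:: (1, (s, wpath s A))] r) [:: (1, (e, wpath e B))]) \in idealk al be k.
  move=> hr; apply/memv_span/flattenP.
  exists [seq vec k (emul (emul [:: (1, (s, wpath s A))] r) [:: (1, q)]) | q <- validpaths n k].
    by apply/allpairsP; exists ((s, wpath s A), r).
  exact: (map_f (fun q => vec k (emul (emul [:: (1, (s, wpath s A))] r) [:: (1, q)])) hB).
move: vec_in; rewrite /e wend_cat wend_lhs; clear e hB hk.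
case: y => /= vec_in.
  have := vec_in (rel1 al be (wend s A)); rewrite vec_rel1 !eqxx; apply.
  by rewrite mem_cat map_f ?mem_enum.
have := vec_in (rel2 al be (ord_pred (wend s A))); rewrite vec_rel2 ord_predK !eqxx; apply.
by rewrite mem_cat map_f ?mem_enum ?orbT.
Qed.

Definition normal_path i j (t : k.-tuple (arrow n)) :=
  [&& validp i t, endpt i t == j & ~~ reducible (map snd t)].
Definition normal_span i j :=
  <<[seq bvec K k (i, val t) | t <- tuples n k & normal_path i j t]>>%VS.

Lemma wvec_in_pathspace i bs : size bs = k -> wvec i bs \in pathspace K i (wend i bs) k.
Proof.
move=> hk; have ht : size (wpath i bs) == k by rewrite size_wpath hk.
apply/memv_span/mapP; exists (Tuple ht) => //.
by rewrite mem_filter /tuples mem_enum andbT /= validp_wpath endpt_wpath eqxx.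
Qed.

Lemma relv_in_pathspace i A y B : size (A ++ lhs y ++ B) = k ->
  relv i A y B \in pathspace K i (wend i (A ++ lhs y ++ B)) k.
Proof.
move=> hk; apply/rpredB; [apply/rpredB|]; [|apply/rpredZ..].
- exact: wvec_in_pathspace.
- by rewrite -(wend_rhs1 i A y B); apply: wvec_in_pathspace; rewrite size_rhs1.
- by rewrite -(wend_rhs2 i A y B); apply: wvec_in_pathspace; rewrite size_rhs2.
Qed.

Lemma wvec_reduce i bs : size bs = k ->
  wvec i bs \in (normal_span i (wend i bs) + (pathspace K i (wend i bs) k :&: idealk al be k))%VS.
Proof.
move: {2}(weight bs).+1 (ltnSn (weight bs)) => m.
elim: m bs => // m IHm bs hm hk.
have [/reducibleP [A [y [B e]]]|hr] := boolP (reducible bs).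
  subst bs; rewrite wvec_lhs; apply/rpredD; [apply/rpredD|]; [|apply/rpredZ..].
  - apply: (subvP (addvSr _ _)).
    by rewrite memv_cap relv_in_pathspace ?relv_in_idealk.
  - rewrite -(wend_rhs1 i A y B); apply: IHm; rewrite ?size_rhs1 //.
    exact: leq_trans (weight_rhs1 A y B) _.
  - rewrite -(wend_rhs2 i A y B); apply: IHm; rewrite ?size_rhs2 //.
    exact: leq_trans (weight_rhs2 A y B) _.
have ht : size (wpath i bs) == k by rewrite size_wpath hk.
apply/(subvP (addvSl _ _))/memv_span/mapP; exists (Tuple ht) => //.
rewrite mem_filter /tuples mem_enum andbT /normal_path /=.
by rewrite validp_wpath endpt_wpath eqxx wpathK hr.
Qed.

Lemma pathspace_split i j :
  pathspace K i j k = (normal_span i j + (pathspace K i j k :&: idealk al be k))%VS.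
Proof.
apply/eqP; rewrite eqEsubv subv_add capvSl !andbT; apply/andP; split.
  apply/span_subvP => x /mapP [t]; rewrite mem_filter => /andP [/andP [hv /eqP <-] _] ->.
  rewrite -(validp_wpathE hv) endpt_wpath; apply: wvec_reduce.
  by rewrite size_map size_tuple.
apply/span_subvP => x /mapP [t]; rewrite mem_filter => /andP [/and3P [hv he _] ht] ->.
by apply/memv_span/mapP; exists t; rewrite // mem_filter hv he.
Qed.

Lemma normal_span_sub i j : (normal_span i j <= <<normal_vecs>>)%VS.
Proof.
apply/span_subvP => x /mapP [t]; rewrite mem_filter => /andP [/and3P [hv _ hr] _] ->.
apply/memv_span/mapP; exists (i, t) => //.
by rewrite mem_filter mem_enum andbT /reducible_path /bits /= hv.
Qed.

Lemma bvec_tuple s (t : k.-tuple (arrow n)) :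
  bvec K k (s, val t) = 'e_(enum_rank ((s, t) : Pk n k)).
Proof. by rewrite /bvec /= valK. Qed.

Lemma normal_red_full : (<<normal_vecs>> + <<red_rels>>)%VS = fullv.
Proof.
apply/eqP; rewrite eqEsubv subvf; apply/subvP => x _.
rewrite (row_sum_delta x); apply: memv_suml => l _; apply: rpredZ.
rewrite -(enum_valK l); case: (enum_val l) => s t; rewrite -bvec_tuple.
have [/andP [hv _]|hr] := boolP (reducible_path (s, t)); last first.
  by apply/(subvP (addvSl _ _))/memv_span/mapP; exists (s, t); rewrite // mem_filter mem_enum andbT.
have := wvec_reduce s (size_tuple (map_tuple snd t)); rewrite /wvec validp_wpathE //.
apply/subvP/addvS; first exact: normal_span_sub.
exact: subv_trans (capvSr _ _) idealk_sub_red_rels.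
Qed.

(* [normal_vecs] and [red_rels] together have as many vectors as the dimension of the
   space they span. *)
Lemma normal_red_cap0 : (<<normal_vecs>> :&: <<red_rels>> = 0)%VS.
Proof.
apply/eqP; rewrite -dimv_eq0 -leqn0.
have hsize : (size normal_vecs + size red_rels = Nk n k)%N.
  by rewrite !size_map !size_filter /Nk cardE -(count_predC reducible_path) addnC.
have : (\dim <<normal_vecs>> + \dim <<red_rels>> <= Nk n k)%N.
  exact: leq_trans (leq_add (dim_span _) (dim_span _)) (eq_leq hsize).
have := dimv_sum_cap <<normal_vecs>> <<red_rels>>; rewrite normal_red_full dimvf /dim /=; lia.
Qed.

Lemma normal_span_cap i j : (normal_span i j :&: (pathspace K i j k :&: idealk al be k) = 0)%VS.
Proof.
apply/eqP; rewrite -subv0 -normal_red_cap0 capvS ?normal_span_sub //.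
exact: subv_trans (capvSr _ _) idealk_sub_red_rels.
Qed.

Lemma hdim_count i j : hdim al be i j k = count (normal_path i j) (tuples n k).
Proof.
rewrite /hdim {1}(pathspace_split i j) dimv_disjoint_sum ?normal_span_cap // addnK /normal_span.
rewrite (eq_map (@bvec_tuple i)) (map_comp (fun l => 'e_l) (fun t => enum_rank ((i, t) : Pk n k))).
rewrite dim_span_deltas ?size_map ?size_filter // map_inj_uniq; first exact/filter_uniq/enum_uniq.
by move=> t1 t2 /enum_rank_inj [].
Qed.

End Relations.

Section WordCount.
Variables (n k : nat).
Local Notation coeffs := ('I_(uphalf k).+1 * 'I_(k./2).+1)%type.

Lemma size_wpath_word (i : 'I_n) (x : coeffs) : size (wpath i (word x.1 x.2 k)) == k.
Proof. by rewrite size_wpath size_word. Qed.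

Definition word_path (i : 'I_n) (x : coeffs) : k.-tuple (arrow n) := Tuple (size_wpath_word i x).

Lemma word_path_inj i : injective (word_path i).
Proof.
move=> [a c] [a' c'] /(congr1 (fun t : k.-tuple (arrow n) => map snd (val t))).
rewrite !wpathK /= => /(word_inj (ltn_ord a) (ltn_ord c) (ltn_ord a') (ltn_ord c')).
by case=> /val_inj-> /val_inj->.
Qed.

Lemma count_normal_path i j : count (normal_path i j) (tuples n k) =
  #|[set x : coeffs | wend i (word x.1 x.2 k) == j]|.
Proof.
rewrite /tuples count_card -(card_imset _ (@word_path_inj i)).
apply: eq_card => t; rewrite unfold_in; apply/idP/imsetP => [/and3P [hv /eqP he hr]|].
  have [a [c []]] := irreducible_word hr; rewrite size_map size_tuple => ha hc ew.
  exists (Ordinal (ha : (a < (uphalf k).+1)%N), Ordinal (hc : (c < (k./2).+1)%N)).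
    by rewrite inE /= -ew -endpt_wpath validp_wpathE // he.
  by apply: val_inj; rewrite /= -ew validp_wpathE.
case=> x; rewrite inE => he ->.
by rewrite /normal_path /= validp_wpath endpt_wpath he wpathK word_irreducible.
Qed.

End WordCount.

Section ShiftMatrices.
Variable n' : nat.
Local Notation n := n'.+1.

Definition ordS_perm : 'S_n := perm (@ordS_inj n).
Definition shift_mx (b : bool) : 'M[int]_n := perm_mx (if b then ordS_perm else ordS_perm^-1%g).
Definition word_mx (bs : seq bool) : 'M[int]_n := \prod_(b <- bs) shift_mx b.

Lemma ordS_perm_step b i : (if b then ordS_perm else ordS_perm^-1%g) i = step i b.
Proof.
case: b; rewrite /step /=; first exact: permE.
by apply: (canLR (permK ordS_perm)); rewrite permE ord_predK.
Qed.

Lemma shift_mxE b i j : shift_mx b i j = (step i b == j)%:R.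
Proof. by rewrite /shift_mx /perm_mx !mxE ordS_perm_step. Qed.

Lemma word_mxE bs i j : word_mx bs i j = (wend i bs == j)%:R.
Proof.
elim: bs i => [|b bs IH] i; first by rewrite /word_mx big_nil mxE.
by rewrite /word_mx big_cons -mulmxE -row_permE mxE IH ordS_perm_step.
Qed.

Lemma shift_mx_inv b : shift_mx b * shift_mx (~~ b) = 1.
Proof. by case: b; rewrite -mulmxE -perm_mxM ?mulgV ?mulVg perm_mx1. Qed.

Lemma card_arrows i j :
  #|[pred a : arrow n | (src a == i) && (tgt a == j)]| = ((ordS i == j) + (ord_pred i == j))%N.
Proof.
set F := fun x b => if (src (x, b) == i) && (tgt (x, b) == j) then 1%N else 0%N.
rewrite -sum1_card big_mkcond /= -(pair_big xpredT xpredT F) /F /=.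
under eq_bigr do rewrite big_bool /=.
rewrite big_split /src /tgt /=; congr addn.
  rewrite (bigD1 i) //= eqxx big1 => [|x /negbTE -> //].
  by rewrite addn0; case: eqP.
rewrite (bigD1 j) //= eqxx andbT big1 => [|x /negbTE ->]; last by rewrite andbF.
by rewrite addn0 (can2_eq (@ordSK n) (@ord_predK n)) eq_sym; case: eqP.
Qed.

Lemma adjM_shift : adjM n = shift_mx true + shift_mx false.
Proof.
apply/matrixP => i j; rewrite [LHS]mxE [RHS]mxE !shift_mxE card_arrows PoszD.
by rewrite /step; case: eqP; case: eqP.
Qed.

End ShiftMatrices.

Section Chebyshev.
Variable R : comNzRingType.

Fixpoint chebU (m : nat) : {poly R} :=
  match m with
  | 0 => 1
  | 1 => 'X
  | (m1.+1 as m2).+1 => 'X * chebU m2 - chebU m1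
  end.

Variables (d : nat) (A B : 'M[R]_d.+1).
Hypotheses (hAB : A * B = 1) (hBA : B * A = 1).

Definition sym_powsum p := \sum_(a < p.+1) A ^+ a * B ^+ (p - a).

Lemma commAB : GRing.comm A B.
Proof. by rewrite /GRing.comm hAB hBA. Qed.

Lemma sym_powsumS p : sym_powsum p.+1 = A ^+ p.+1 + B * sym_powsum p.
Proof.
rewrite /sym_powsum big_ord_recr /= subnn expr0 mulr1 addrC mulr_sumr; congr (_ + _).
apply: eq_bigr => a _; rewrite subSn; last by rewrite -ltnS.
by rewrite exprS mulrA -(commrX _ (commr_sym commAB)) mulrA.
Qed.

Lemma sym_powsum_chebU p : sym_powsum p = horner_mx (A + B) (chebU p).
Proof.
suff : sym_powsum p = horner_mx (A + B) (chebU p) /\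
       sym_powsum p.+1 = horner_mx (A + B) (chebU p.+1) by case.
elim: p => [|p [IH1 IH2]].
  rewrite /= horner_mx_X rmorph1 sym_powsumS /sym_powsum big_ord1 /= !expr0 expr1 !mulr1.
  by split.
split; first exact: IH2.
rewrite [chebU _]/= rmorphB rmorphM /= horner_mx_X -IH1 -IH2.
rewrite [in LHS]sym_powsumS mulrDl [in A * _]sym_powsumS mulrDr mulrA hAB mul1r -exprS.
by rewrite addrAC addrK.
Qed.

End Chebyshev.

Arguments chebU {R} m : simpl nomatch.

Section HilbertMatrix.
Variable n' : nat.
Local Notation n := n'.+1.
Local Notation P := (shift_mx n' true).
Local Notation Q := (shift_mx n' false).

Lemma commPQ : GRing.comm P Q.
Proof. by rewrite /GRing.comm (shift_mx_inv n' true) (shift_mx_inv n' false). Qed.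

Lemma word_mx_count bs : word_mx n' bs = P ^+ count id bs * Q ^+ count negb bs.
Proof.
elim: bs => [|b bs IH]; first by rewrite /word_mx big_nil !expr0 mulr1.
rewrite /word_mx big_cons -/(word_mx n' bs) IH mulrA; case: b => /=; rewrite add1n add0n.
  by rewrite -exprS.
by rewrite (commrX _ (commr_sym commPQ)) -mulrA -exprS.
Qed.

Variables (K : fieldType) (al be : 'I_n -> K).

Lemma Hmat_word_mx k :
  Hmat al be k = \sum_(x : 'I_(uphalf k).+1 * 'I_(k./2).+1) word_mx n' (word x.1 x.2 k).
Proof.
apply/matrixP => i j; rewrite !mxE summxE hdim_count count_normal_path.
under eq_bigr do rewrite word_mxE.
rewrite -natz -sum1_card natr_sum big_mkcond /=; apply: eq_bigr => x _.
by rewrite inE; case: eqP.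
Qed.

Lemma Hmat_chebU k : Hmat al be k = horner_mx (adjM n) (chebU (uphalf k) * chebU k./2).
Proof.
have hPQ : P * Q = 1 := shift_mx_inv n' true.
have hQP : Q * P = 1 := shift_mx_inv n' false.
have -> : horner_mx (adjM n) (chebU (uphalf k) * chebU k./2) =
          sym_powsum P Q (uphalf k) * sym_powsum P Q k./2.
  by rewrite rmorphM adjM_shift !(sym_powsum_chebU hPQ hQP).
rewrite Hmat_word_mx /sym_powsum big_distrlr pair_big /=.
apply: eq_bigr => -[a c] _ /=.
rewrite word_mx_count (count_word (ltn_ord a) (ltn_ord c)).
rewrite (count_negb_word (ltn_ord a) (ltn_ord c)) !exprD -!mulrA.
by congr (_ * _); rewrite !mulrA (commrX _ (commr_sym (commrX _ (commr_sym commPQ)))).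
Qed.

End HilbertMatrix.

Definition conv (R : pzSemiRingType) (f g : nat -> R) k := \sum_(l < k.+1) f l * g (k - l)%N.

Lemma convC (R : comPzSemiRingType) (f g : nat -> R) k : conv f g k = conv g f k.
Proof.
rewrite /conv (reindex_inj rev_ord_inj) /=; apply: eq_bigr => l _.
have hl : (l <= k)%N by rewrite -ltnS.
by rewrite subSS (subKn hl) mulrC.
Qed.

Section MatrixPowerSeries.
Variables (n' : nat) (phi : {rmorphism {poly int} -> 'M[int]_n'.+1}).

Lemma pscoef_map s : pscoef (map phi s) =1 phi \o nth 0 s.
Proof.
move=> k; rewrite /pscoef /=; have [hk|hk] := ltnP k (size s); first exact: nth_map.
by rewrite !nth_default ?size_map ?rmorph0.
Qed.

Lemma psmul_rmorph F G f g : F =1 phi \o f -> G =1 phi \o g ->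
  forall k, psmul F G k = phi (conv f g k).
Proof.
move=> hF hG k; rewrite /psmul /conv rmorph_sum; apply: eq_bigr => l _.
by rewrite hF hG rmorphM mulmxE.
Qed.

Lemma ps_inverse_rmorph F G f g : F =1 phi \o f -> G =1 phi \o g ->
  (forall k, conv f g k = (k == 0)%:R) -> ps_inverse F G.
Proof.
move=> hF hG hfg; split=> k.
  by rewrite (psmul_rmorph hF hG) hfg /psone; case: k => [|k] /=; rewrite ?rmorph1 ?rmorph0.
by rewrite (psmul_rmorph hG hF) convC hfg /psone; case: k => [|k] /=; rewrite ?rmorph1 ?rmorph0.
Qed.

End MatrixPowerSeries.

Definition hcoef k : {poly int} := chebU (uphalf k) * chebU k./2.
Definition denom : seq {poly int} := [:: 1; - 'X; 0; 'X; -1].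

(* With [u := uphalf k] and [h := k./2], the coefficient of [t^(k+4)] is
   [U_(u+2) U_(h+2) - X U_(u+1) U_(h+2) + X U_u U_(h+1) - U_u U_h], which vanishes by
   the recurrence of [U]. *)
Lemma conv_denom_hcoef k : conv (nth 0 denom) hcoef k = (k == 0)%:R.
Proof.
case: k => [|[|[|[|k]]]]; rewrite /conv !big_ord_recl ?big_ord0 /hcoef /=; try ring.
rewrite big1 => [|l _]; last by rewrite nth_default ?mul0r.
rewrite /bump /= !subSS subn0; ring.
Qed.

Lemma conv_factors : conv (nth 0 [:: 1; - 'X; 1]) (nth 0 [:: 1; 0; -1]) =1 nth 0 denom.
Proof.
case=> [|[|[|[|[|k]]]]]; rewrite /conv !big_ord_recl ?big_ord0 /=; try ring.
by rewrite big1 => [|l _]; rewrite ?mul0r // !nth_nil; ring.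
Qed.

Theorem lemma3p5 (K : closedFieldType) (hK : [pchar K] =i pred0)
  (n : nat) (hn : (0 < n)%N) (alpha beta : 'I_n -> K) :
  let M := adjM n in
  let h := Hmat alpha beta in
  ps_inverse (pscoef [:: 1%:M; - M; 0; M; - 1%:M]) h /\
  ps_inverse (psmul (pscoef [:: 1%:M; - M; 1%:M]) (pscoef [:: 1%:M; 0; - 1%:M])) h.
Proof.
case: n hn alpha beta => [//|n'] _ alpha beta M h.
have hh : h =1 horner_mx M \o hcoef by move=> k; rewrite /h Hmat_chebU.
have e1 : horner_mx M 1 = 1%:M := rmorph1 _.
have e0 : horner_mx M 0 = 0 := rmorph0 _.
have eN p : horner_mx M (- p) = - horner_mx M p := rmorphN _ p.
have eX : horner_mx M 'X = M := horner_mx_X M.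
have hA : pscoef [:: 1%:M; - M; 0; M; - 1%:M] =1 horner_mx M \o nth 0 denom.
  by move=> k; rewrite -pscoef_map /= !eN e1 e0 eX.
have hB1 : pscoef [:: 1%:M; - M; 1%:M] =1 horner_mx M \o nth 0 [:: 1; - 'X; 1].
  by move=> k; rewrite -pscoef_map /= eN e1 eX.
have hB2 : pscoef [:: 1%:M; 0; - 1%:M] =1 horner_mx M \o nth 0 [:: 1; 0; -1].
  by move=> k; rewrite -pscoef_map /= eN e1 e0.
split; apply: (ps_inverse_rmorph _ hh conv_denom_hcoef) => // k.
by rewrite (psmul_rmorph hB1 hB2) conv_factors.
Qed.
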